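(* Let $p(x) \in \mathbb{R}[x]$ be a non-constant real-rooted polynomial. Let $P(x) = \int_0^x p(y)\,dy$ and let $C \in \mathbb{R}$. Then $P(x)+C$ is real-rooted if and only if for every root $\mu$ of $p(x)$ we have: $P(\mu)+C \geq 0$ if $p'(\mu) < 0$; $P(\mu)+C \leq 0$ if $p'(\mu) > 0$; and $P(\mu)+C = 0$ if $p'(\mu) = 0$.
   Context: A nonzero polynomial $p(x) \in \mathbb{R}[x]$ is called real-rooted if every complex root of $p(x)$ is real. $p'(x)$ denotes the derivative of $p(x)$. *)

From mathcomp Require Import all_boot all_order all_algebra all_reals.
From mathcomp Require Import complex.
Set Implicit Arguments. Unset Strict Implicit. Unset Printing Implicit Defensive.
Import Order.TTheory GRing.Theory Num.Theory.
Local Open Scope ring_scope.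

Definition real_rooted (R : rcfType) (p : {poly R}) : Prop :=
  p != 0 /\
  forall z : R[i], root (map_poly (fun x : R => x%:C%C) p) z -> complex.Im z = 0.

(* P(x) = \int_0^x p(y) dy, i.e. the antiderivative of p with P(0) = 0:
   coefficient i+1 of P is p_i / (i+1), constant coefficient 0. *)
Definition poly_prim (R : fieldType) (p : {poly R}) : {poly R} :=
  \poly_(i < (size p).+1) (if i is j.+1 then p`_j / (j.+1)%:R else 0).

(* Write Q = P + C, so that Q' = p and Q'' = p'; Q is real-rooted iff it has deg p + 1
   real roots counted with multiplicity.
   If Q is real-rooted and mu is a root of p with Q(mu) <> 0, Rolle's theorem applied to
   the roots of Q on either side of mu gives deg p - 1 roots of p other than mu.  So mu
   cannot be a double root of p; and if Q(mu) and p'(mu) had the same sign, the mean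
   value theorem between mu and the nearest root of Q on its left (if there is none,
   Rolle already gives deg p roots other than mu) would give one root of p too many.
   Conversely, sweep the roots of p from left to right.  A root a of p with Q(a) = 0 is a
   root of Q of multiplicity one more than in p; at the other roots of p, which are
   simple, Q and p' have opposite signs.  This forces Q to change sign between two
   consecutive roots of the second kind, and beyond the extreme roots when these are of
   the second kind (compare with the sign of Q at infinity), which yields the missing
   roots of Q. *)

From mathcomp Require Import all_boot all_order all_algebra all_reals.
From mathcomp Require Import complex polyorder polyrcf.
From mathcomp Require Import zify lra.
Import Order.TTheory GRing.Theory Num.Theory Num.Def.
Local Open Scope ring_scope.
Set Implicit Arguments. Unset Strict Implicit. Unset Printing Implicit Defensive.

Local Notation prodXsubC s := (\prod_(x <- s) ('X - x%:P)).

Lemma filter_pred1_nseq (T : eqType) (s : seq T) x :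
  filter (pred1 x) s = nseq (count_mem x s) x.
Proof. by rewrite -size_filter; apply/all_pred1P; apply: filter_all. Qed.

Section OrderedSeq.

Variables (d : Order.disp_t) (T : orderType d).
Implicit Types (s : seq T) (x : T).
Local Open Scope order_scope.

Lemma exists_min_seq s : s != [::] -> exists2 m, m \in s & all (>= m) s.
Proof.
elim: s => // x [|y s] IH _; first by exists x; rewrite ?mem_seq1 //= lexx.
have [m ms mle] := IH isT; have [xm|mx] := leP x m.
  exists x; first exact: mem_head.
  by apply/allP => z /predU1P[->|/(allP mle)/(le_trans xm)].
exists m; first by rewrite inE ms orbT.
by apply/allP => z /predU1P[->|/(allP mle)//]; apply: ltW.
Qed.

Lemma count_leE s x : count (<= x) s = (count (< x) s + count_mem x s)%N.
Proof. by elim: s => //= y s ->; rewrite le_eqVlt; case: ltgtP => //=; lia. Qed.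

End OrderedSeq.

Lemma exists_max_seq (d : Order.disp_t) (T : orderType d) (s : seq T) :
  s != [::] -> exists2 m, m \in s & all (<= m)%O s.
Proof. by move=> s0; have [m ms mle] := @exists_min_seq _ T^d s s0; exists m. Qed.

Section ProdXsubC.

Variable R : realFieldType.
Implicit Types (s u v : seq R) (q : {poly R}) (a x : R).

Lemma prodXsubC_nseq k a : prodXsubC (nseq k a) = ('X - a%:P) ^+ k.
Proof. by rewrite big_nseq iter_mulr_1. Qed.

Lemma dvdp_prodXsubC_filter (P : pred R) s : prodXsubC (filter P s) %| prodXsubC s.
Proof. by rewrite big_filter [X in _ %| X](bigID P) /= dvdp_mulIl. Qed.

Lemma dvdp_prodXsubC_count s q a :
  prodXsubC s %| q -> ('X - a%:P) ^+ count_mem a s %| q.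
Proof.
rewrite -prodXsubC_nseq -filter_pred1_nseq; apply: dvdp_trans.
exact: dvdp_prodXsubC_filter.
Qed.

Lemma root_prodXsubC_dvdp s q x : prodXsubC s %| q -> x \in s -> root q x.
Proof.
move=> sq xs; rewrite -dvdp_XsubCl (dvdp_trans _ sq) // dvdp_XsubCl.
by rewrite root_prod_XsubC.
Qed.

Lemma size_prodXsubC_dvdp s q : q != 0 -> prodXsubC s %| q -> (size s < size q)%N.
Proof. by move=> q0 /(dvdp_leq q0); rewrite size_prod_XsubC. Qed.

Lemma dvdp_prodXsubC_cat u v q : {in u & v, forall x y, x < y} ->
  prodXsubC u %| q -> prodXsubC v %| q -> prodXsubC (u ++ v) %| q.
Proof.
move=> uv uq vq; rewrite big_cat Gauss_dvdp ?uq ?vq //.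
elim: v {vq} uv => [|y v IH] uv; first by rewrite big_nil coprimep1.
rewrite big_cons coprimepMr coprimep_XsubC root_prod_XsubC IH ?andbT.
  by apply/negP => yu; have := uv y y yu (mem_head _ _); rewrite ltxx.
by move=> x z xu zv; apply: uv; rewrite // inE zv orbT.
Qed.

Lemma dvdp_XsubC_expS_deriv q a k : root q a ->
  (('X - a%:P) ^+ k.+1 %| q) = (('X - a%:P) ^+ k %| q^`()).
Proof.
move=> qa; have [->|q0] := eqVneq q 0; first by rewrite deriv0 !dvdp0.
have q'0 : q^`() != 0.
  apply: contraNneq q0 => q'0; have : (size q <= 1)%N.
    by have := size_deriv q; rewrite q'0 size_poly0 -subn1 => /esym/eqP; rewrite subn_eq0.
  by move=> /size1_polyC qE; move: qa; rewrite qE rootC => /eqP ->.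
by rewrite !root_le_mu // (mu_deriv_root q0 qa) addn1 ltnS.
Qed.

End ProdXsubC.

Lemma poly_prim_deriv (R : numFieldType) (p : {poly R}) : (poly_prim p)^`() = p.
Proof.
apply/polyP => i; rewrite coef_deriv coef_poly ltnS.
case: ltnP => [_|pi]; last by rewrite mul0rn nth_default.
by rewrite -[_ *+ i.+1]mulr_natr divfK // pnatr_eq0.
Qed.

Lemma eq_sgr_mull_lt0 (R : realDomainType) (x y z : R) :
  sgr x = sgr y -> (x * z < 0) = (y * z < 0).
Proof. by move=> xy; rewrite -sgr_lt0 -[y * z < 0]sgr_lt0 !sgrM xy. Qed.

(* The condition of the theorem for Q = P + C, whose second derivative is p'. *)
Definition critical_value_sign (R : numDomainType) (Q : {poly R}) : Prop :=
  forall mu, root Q^`() mu -> Q.[mu] != 0 -> Q.[mu] * (Q^`())^`().[mu] < 0.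

Section RealClosedField.

Variable R : rcfType.
Implicit Types (p q Q : {poly R}) (s t m : seq R) (a b : R).

Lemma real_rooted_prodXsubC q : real_rooted q -> exists s, q = lead_coef q *: prodXsubC s.
Proof.
case=> q0 qreal; have [rs qE] := closed_field_poly_normal (map_poly (real_complex R) q).
have rsE z : z \in rs -> z = (complex.Re z)%:C%C.
  move=> zrs; have /qreal : root (map_poly (real_complex R) q) z.
    by rewrite qE rootZ ?root_prod_XsubC // lead_coef_eq0 map_poly_eq0.
  by case: z {zrs} => a b /= ->.
exists (map (@complex.Re R) rs); apply: (map_poly_inj (real_complex R)).
rewrite map_polyZ rmorph_prod {1}qE lead_coef_map big_map; congr (_ *: _).
by apply: eq_big_seq => z /rsE {1}->; rewrite rmorphB /= map_polyX map_polyC.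
Qed.

Lemma dvdp_prodXsubC_real_rooted q s :
  q != 0 -> prodXsubC s %| q -> (size q <= (size s).+1)%N -> real_rooted q.
Proof.
move=> q0 sq sizeq; split=> // z.
have : prodXsubC s %= q.
  by rewrite -(dvdp_size_eqp sq) eqn_leq (dvdp_leq q0 sq) size_prod_XsubC sizeq.
rewrite -(eqp_map (real_complex R)) => /eqp_root <-.
rewrite rmorph_prod (eq_bigr _ (fun x _ => map_polyXsubC _ x)) /=.
by rewrite -(big_map _ xpredT (fun y => 'X - y%:P)) root_prod_XsubC => /mapP[x _ ->].
Qed.


Lemma deriv_neq0_size_gt1 q : q^`() != 0 -> (1 < size q)%N.
Proof. by rewrite -size_poly_eq0 size_deriv; case: (size q) => [|[|]]. Qed.

Lemma sgp_pinfty_deriv q : q^`() != 0 -> sgp_pinfty q^`() = sgp_pinfty q.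
Proof.
move=> /deriv_neq0_size_gt1 q1; rewrite /sgp_pinfty !lead_coefE size_deriv coef_deriv sgrMn.
by case: (size q) q1 => [|[|n]] //= _; rewrite mul1r.
Qed.

Lemma sgp_minfty_deriv q : q^`() != 0 -> sgp_minfty q^`() = - sgp_minfty q.
Proof.
move=> /deriv_neq0_size_gt1 q1; rewrite /sgp_minfty !lead_coefE size_deriv coef_deriv.
case: (size q) q1 => [|[|n]] //= _.
by rewrite mulrnAr sgrMn /= mul1r exprS mulN1r mulNr sgrN opprK.
Qed.

Lemma sgr_right_simple_root p a b : root p b -> p^`().[b] != 0 -> b < a ->
  exists2 y, b < y < a & sgr p.[y] = sgr p^`().[b].
Proof.
move=> pb p'b ba; have p0 : p != 0 by apply: contra_neq p'b => ->; rewrite deriv0 horner0.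
have [y yI] := neighpr_wit ba p0; exists y.
  have := next_root_in p b a; rewrite (max_l (ltW ba)).
  move: (yI); rewrite /neighpr !in_itv /= => /andP[b_y ylt] /andP[_ na].
  by rewrite b_y (lt_le_trans ylt na).
by rewrite (sgr_neighpr yI) (sgp_right_deriv pb) sgp_rightNroot.
Qed.

Lemma sgr_left_simple_root p a b : root p a -> p^`().[a] != 0 -> b < a ->
  exists2 y, b < y < a & sgr p.[y] = - sgr p^`().[a].
Proof.
move=> pa p'a ba; have p0 : p != 0 by apply: contra_neq p'a => ->; rewrite deriv0 horner0.
have [y yI] := neighpl_wit ba p0; exists y.
  have := prev_root_in p b a; rewrite (min_l (ltW ba)).
  move: (yI); rewrite /neighpl !in_itv /= => /andP[ly ya] /andP[bl _].
  by rewrite ya (le_lt_trans bl ly).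
rewrite (sgr_neighpl yI) (sgp_right_deriv pa) sgp_rightNroot //.
by rewrite (mu_deriv_root p0 pa) (muNroot p'a) mulN1r.
Qed.


Lemma rolle_prodXsubC (P : pred R) s q :
  (forall x y z, P x -> P z -> x <= y <= z -> P y) -> all P s -> prodXsubC s %| q ->
  exists t, [/\ prodXsubC t %| q^`(), size t = (size s).-1 & all P t].
Proof.
(* The k copies of the least root m leave k - 1 copies in q'; Rolle's theorem between m
   and the next root m' gives one more root of q'. *)
have [n] := ubnP (size s); elim: n => // n IH in P s *; rewrite ltnS => sn Pconv Ps sq.
have [->|s0] := eqVneq s [::]; first by exists [::]; rewrite big_nil dvd1p.
have [m ms mle] := exists_min_seq s0; set k := count_mem m s.
set s2 := filter (predC1 m) s.
have s2_gt x : x \in s2 -> m < x.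
  by rewrite mem_filter /= lt_neqAle eq_sym => /andP[-> /(allP mle)].
have sizes : size s = (k + size s2)%N by rewrite size_filter count_predC.
have k_gt0 : (0 < k)%N by rewrite -has_count; apply/hasP; exists m => /=.
have mq : ('X - m%:P) ^+ k.-1 %| q^`().
  rewrite -dvdp_XsubC_expS_deriv ?(root_prodXsubC_dvdp sq ms) // prednK //.
  exact: dvdp_prodXsubC_count.
have [s2E|s2_0] := eqVneq s2 [::].
  exists (nseq k.-1 m); rewrite prodXsubC_nseq size_nseq sizes s2E addn0.
  by split=> //; rewrite all_nseq (allP Ps) ?orbT.
have [m' m's2 m'le] := exists_min_seq s2_0; have mm' := s2_gt _ m's2.
have m's : m' \in s by move: m's2; rewrite mem_filter => /andP[].
have [||||t2 [t2q st2 Pt2]] := IH [pred x | P x && (m' <= x)] s2.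
- by move: sn; rewrite sizes => /(leq_trans _); apply; rewrite -add1n leq_add2r.
- move=> x y z /andP[Px m'x] /andP[Pz _] /andP[xy yz].
  by rewrite /= (Pconv x y z) ?xy ?yz ?(le_trans m'x xy).
- apply/allP=> x xs2 /=; rewrite (allP m'le) // andbT.
  by apply: (allP Ps); move: xs2; rewrite mem_filter => /andP[].
- exact: dvdp_trans (dvdp_prodXsubC_filter _ _) sq.
have [c /andP[mc cm'] q'c] : exists2 c, m < c < m' & root q^`() c.
  have [|c] := @poly_rolle _ m m' q mm'.
    by rewrite (eqP (root_prodXsubC_dvdp sq ms)) (eqP (root_prodXsubC_dvdp sq m's)).
  by rewrite in_itv => cI /eqP; exists c.
exists (nseq k.-1 m ++ c :: t2); split.
- apply: dvdp_prodXsubC_cat; rewrite ?prodXsubC_nseq //.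
    move=> x y /nseqP[-> _]; rewrite inE => /predU1P[->//|/(allP Pt2)/andP[_]].
    exact: lt_le_trans.
  apply: (@dvdp_prodXsubC_cat _ [:: c]); rewrite ?big_seq1 ?dvdp_XsubCl //.
  by move=> x y; rewrite inE => /eqP-> /(allP Pt2)/andP[_]; apply: lt_le_trans.
- rewrite size_cat size_nseq /= st2 sizes prednK ?lt0n ?size_eq0 //.
  by rewrite -[in RHS](prednK k_gt0) addSn.
have Pm := allP Ps m ms; have Pm' := allP Ps m' m's.
rewrite all_cat all_nseq Pm orbT /= (Pconv m c m') ?(ltW mc) ?(ltW cm') //=.
by apply/allP => x /(allP Pt2)/andP[].
Qed.


Lemma rolle_prodXsubC_outside Q s a b : a <= b -> all [pred x | (x < a) || (b < x)] s ->
  prodXsubC s %| Q -> exists tL tR,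
  [/\ prodXsubC tL %| Q^`(), prodXsubC tR %| Q^`(), all (< a) tL, all (> b) tR &
      (size s <= size tL + size tR + has (< a) s + has (> b) s)%N].
Proof.
move=> ab out sQ.
have [|||tL [tLQ sztL ltL]] := @rolle_prodXsubC (< a) (filter (< a) s) Q.
- by move=> x y z _ za /andP[_ yz]; apply: le_lt_trans za.
- exact: filter_all.
- exact: dvdp_trans (dvdp_prodXsubC_filter _ _) sQ.
have [|||tR [tRQ sztR gtR]] := @rolle_prodXsubC (> b) (filter (> b) s) Q.
- by move=> x y z bx _ /andP[xy _]; apply: lt_le_trans xy.
- exact: filter_all.
- exact: dvdp_trans (dvdp_prodXsubC_filter _ _) sQ.
exists tL, tR; split=> //.
have sizes : size s = (count (< a) s + count (> b) s)%N.
  rewrite -(count_predC (< a)); congr (_ + _)%N; apply: eq_in_count => x xs /=.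
  rewrite -leNgt; apply/idP/idP => [ax|bx]; last exact: ltW (le_lt_trans ab bx).
  by move: (allP out x xs); rewrite /= ltNge ax.
have pred_le n : (n <= n.-1 + (0 < n))%N by case: n => // n; rewrite addn1.
rewrite sztL sztR !size_filter !has_count sizes -addnA addnACA.
exact: leq_add (pred_le _) (pred_le _).
Qed.

Lemma antideriv_roots_overflow Q s m a b : Q^`() != 0 -> prodXsubC s %| Q ->
  (size Q^`() <= size s)%N -> a <= b -> all [pred x | (x < a) || (b < x)] s ->
  all [pred x | a <= x <= b] m -> prodXsubC m %| Q^`() ->
  (has (< a) s + has (> b) s <= size m)%N -> False.
Proof.
move=> p0 sQ sp ab out inm mp hm.
have [tL [tR [tLp tRp ltL gtR sizes]]] := rolle_prodXsubC_outside ab out sQ.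
have : prodXsubC (tL ++ m ++ tR) %| Q^`().
  apply: dvdp_prodXsubC_cat => //; last first.
    apply: dvdp_prodXsubC_cat => // x y /(allP inm)/andP[_ xb] /(allP gtR).
    exact: le_lt_trans.
  move=> x y /(allP ltL) xa; rewrite mem_cat => /orP[/(allP inm)/andP[ay _]|].
    exact: lt_le_trans ay.
  by move=> /(allP gtR) /= b_y; apply: lt_trans xa (le_lt_trans ab b_y).
move=> /(size_prodXsubC_dvdp p0); rewrite !size_cat addnA ltnNge => /negP; apply.
rewrite -addnA in sizes; rewrite addnAC.
exact: leq_trans sp (leq_trans sizes (leq_add (leqnn _) hm)).
Qed.

Lemma extra_critical_point Q r mu : root Q r -> r < mu -> root Q^`() mu ->
  0 < Q.[mu] * (Q^`())^`().[mu] -> exists2 y, r < y < mu & root Q^`() y.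
Proof.
move=> Qr rmu pmu prod_gt0.
have p'0 : (Q^`())^`().[mu] != 0 by apply: contraTneq prod_gt0 => ->; rewrite mulr0 ltxx.
have [xi] := poly_mvt Q rmu; rewrite in_itv (eqP Qr) subr0 => /andP[rxi ximu] mvt.
have [z /andP[xiz zmu] sgr_z] := sgr_left_simple_root pmu p'0 ximu.
have sgr_xi : sgr Q^`().[xi] = sgr Q.[mu].
  by rewrite mvt sgrM (@gtr0_sg _ (mu - r)) ?subr_gt0 ?mulr1.
have : Q^`().[xi] * Q^`().[z] < 0.
  rewrite (eq_sgr_mull_lt0 _ sgr_xi) mulrC (eq_sgr_mull_lt0 _ (etrans sgr_z (esym (sgrN _)))).
  by rewrite mulNr oppr_lt0 mulrC.
case/(poly_ivtoo (ltW xiz)) => y; rewrite in_itv => /andP[xiy yz] py.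
by exists y; rewrite ?(lt_trans rxi xiy) ?(lt_trans yz zmu).
Qed.

Lemma real_rooted_critical_value_sign Q : Q^`() != 0 -> real_rooted Q ->
  critical_value_sign Q.
Proof.
move=> p0 /real_rooted_prodXsubC[s Qs] mu pmu Qmu.
have Q0 : Q != 0 by apply: contra_neq Qmu => ->; rewrite horner0.
have sQ : prodXsubC s %| Q by rewrite [X in _ %| X]Qs dvdpZr ?lead_coef_eq0.
have sp : (size Q^`() <= size s)%N.
  by rewrite size_deriv Qs size_scale ?lead_coef_eq0 // size_prod_XsubC.
have mus : mu \notin s by apply: contra Qmu => /(root_prodXsubC_dvdp sQ).
have out c : {in s, forall x, x < mu -> x < c} -> all [pred x | (x < c) || (mu < x)] s.
  move=> sc; apply/allP => x xs /=.
  have [/(sc x xs)->//|_|xmu] := ltgtP x mu; first by rewrite orbT.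
  by move: mus; rewrite -xmu xs.
have overflow := antideriv_roots_overflow p0 sQ sp.
have [//|prod_gt0|] := ltrgtP (Q.[mu] * (Q^`())^`().[mu]) 0; last first.
  move/eqP; rewrite mulf_eq0 (negPf Qmu) /= => p'0; exfalso.
  apply: (overflow (nseq 2 mu) mu mu (lexx mu)).
  - by apply: out.
  - by rewrite all_nseq /= lexx.
  - by rewrite prodXsubC_nseq dvdp_XsubC_expS_deriv // expr1 dvdp_XsubCl.
  - exact: leq_add (leq_b1 _) (leq_b1 _).
exfalso; have [sL|noL] := boolP (has (< mu) s).
  have [|r] := exists_max_seq (s := filter (< mu) s).
    by rewrite -size_eq0 size_filter -lt0n -has_count.
  rewrite mem_filter => /andP[rmu rs] rmax.
  have [y /andP[ry ymu] py] :=
    extra_critical_point (root_prodXsubC_dvdp sQ rs) rmu pmu prod_gt0.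
  apply: (overflow [:: y; mu] y mu (ltW ymu)).
  - apply: out => x xs xmu; apply: le_lt_trans ry.
    by apply: (allP rmax); rewrite mem_filter /= xmu.
  - by rewrite /= !lexx (ltW ymu).
  - apply: (@dvdp_prodXsubC_cat _ [:: y] [:: mu]); rewrite ?big_seq1 ?dvdp_XsubCl //.
    by move=> x z; rewrite !inE => /eqP-> /eqP->.
  - exact: leq_add (leq_b1 _) (leq_b1 _).
apply: (overflow [:: mu] mu mu (lexx mu)).
- by apply: out.
- by rewrite /= lexx.
- by rewrite big_seq1 dvdp_XsubCl.
- by rewrite (negPf noL) leq_b1.
Qed.

End RealClosedField.

Section CriticalRoots.

Variables (R : rcfType) (Q : {poly R}).
Hypothesis Qcrit : critical_value_sign Q.
Local Notation p := Q^`().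
Implicit Types (a b : R).

Lemma critical_deriv_neq0 a : root p a -> Q.[a] != 0 -> p^`().[a] != 0.
Proof. by move=> pa /(Qcrit pa); apply: contraTneq => ->; rewrite mulr0 ltxx. Qed.

Lemma root_between_critical_points b a : b < a -> root p b -> root p a ->
  (forall x, b < x < a -> ~~ root p x) -> Q.[b] != 0 -> Q.[a] != 0 ->
  exists2 y, b < y < a & root Q y.
Proof.
move=> ba pb pa nr Qb Qa.
have [QQ|QQ] := boolP (Q.[b] * Q.[a] < 0).
  by have [y] := poly_ivtoo (ltW ba) QQ; rewrite in_itv => yI Qy; exists y.
have {}QQ : 0 < Q.[b] * Q.[a] by rewrite lt0r mulf_neq0 // leNgt.
have [y1 /andP[by1 y1a] s1] := sgr_right_simple_root pb (critical_deriv_neq0 pb Qb) ba.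
have [y2 /andP[y1y2 y2a] s2] := sgr_left_simple_root pa (critical_deriv_neq0 pa Qa) y1a.
have : p.[y1] * p.[y2] < 0.
  rewrite (eq_sgr_mull_lt0 _ s1) mulrC (eq_sgr_mull_lt0 _ (etrans s2 (esym (sgrN _)))).
  rewrite mulNr oppr_lt0 mulrC; have := Qcrit pa Qa.
  by rewrite -(nmulr_rgt0 _ (Qcrit pb Qb)) mulrACA (pmulr_rgt0 _ QQ).
case/(poly_ivtoo (ltW y1y2)) => y; rewrite in_itv => /andP[y1y yy2] py.
by have := nr y; rewrite (lt_trans by1 y1y) (lt_trans yy2 y2a) py => /(_ isT).
Qed.

Lemma root_left_of_critical_points a : root p a -> (forall x, x < a -> ~~ root p x) ->
  Q.[a] != 0 -> exists2 y, y < a & root Q y.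
Proof.
move=> pa nr Qa; have p'a := critical_deriv_neq0 pa Qa.
have p0 : p != 0 by apply: contra_neq p'a => ->; rewrite deriv0 horner0.
have Q0 : Q != 0 by apply: contra_neq p0 => ->; rewrite deriv0.
have a1 : a - 1 < a by lra.
have [z /andP[_ za] sgr_z] := sgr_left_simple_root pa p'a a1.
have sgr_z_minfty : sgr p.[z] = sgp_minfty p.
  apply: (@sgp_minftyP _ z); last by rewrite in_itv /= lexx.
  by move=> x; rewrite in_itv /= => xz; apply: nr; apply: le_lt_trans za.
set w := Num.min (- cauchy_bound Q) (a - 1).
have wa : w < a by rewrite /w gt_min a1 orbT.
have sgr_w : sgr Q.[w] = sgp_minfty Q.
  apply: (@sgp_minftyP _ (- cauchy_bound Q)); first exact: le_cauchy_bound.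
  by rewrite in_itv /= ge_min lexx.
have : Q.[w] * Q.[a] < 0.
  rewrite (eq_sgr_mull_lt0 (y := p^`().[a])); first by rewrite mulrC Qcrit.
  rewrite sgr_w -[sgp_minfty Q]opprK -sgp_minfty_deriv //.
  by rewrite -sgr_z_minfty sgr_z opprK.
by case/(poly_ivtoo (ltW wa)) => y; rewrite in_itv => /andP[_ ya] Qy; exists y.
Qed.

Lemma root_right_of_critical_points a : root p a -> (forall x, a < x -> ~~ root p x) ->
  Q.[a] != 0 -> exists2 y, a < y & root Q y.
Proof.
move=> pa nr Qa; have p'a := critical_deriv_neq0 pa Qa.
have p0 : p != 0 by apply: contra_neq p'a => ->; rewrite deriv0 horner0.
have Q0 : Q != 0 by apply: contra_neq p0 => ->; rewrite deriv0.
have a1 : a < a + 1 by lra.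
have [z /andP[az _] sgr_z] := sgr_right_simple_root pa p'a a1.
have sgr_z_pinfty : sgr p.[z] = sgp_pinfty p.
  apply: (@sgp_pinftyP _ z); last by rewrite in_itv /= lexx.
  by move=> x; rewrite in_itv /= andbT => zx; apply: nr; apply: lt_le_trans zx.
set w := Num.max (cauchy_bound Q) (a + 1).
have aw : a < w by rewrite /w lt_max a1 orbT.
have sgr_w : sgr Q.[w] = sgp_pinfty Q.
  apply: (@sgp_pinftyP _ (cauchy_bound Q)); first exact: ge_cauchy_bound.
  by rewrite in_itv /= le_max lexx.
have : Q.[a] * Q.[w] < 0.
  rewrite mulrC (eq_sgr_mull_lt0 (y := p^`().[a])); first by rewrite mulrC Qcrit.
  by rewrite sgr_w -sgp_pinfty_deriv // -sgr_z_pinfty sgr_z.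
by case/(poly_ivtoo (ltW aw)) => y; rewrite in_itv => /andP[ay _] Qy; exists y.
Qed.

End CriticalRoots.

Section Sweep.

Variables (R : rcfType) (Q : {poly R}) (u : seq R).
Local Notation p := Q^`().
Hypotheses (Qcrit : critical_value_sign Q) (p0 : p != 0).
Hypothesis p_prod : p = lead_coef p *: prodXsubC u.
Implicit Types (a b : R) (s : seq R).

Lemma root_deriv_mem x : root p x = (x \in u).
Proof. by rewrite p_prod rootZ ?lead_coef_eq0 // root_prod_XsubC. Qed.

Lemma root_mult_dvdp a : ('X - a%:P) ^+ (count_mem a u) %| p.
Proof. by apply: dvdp_prodXsubC_count; rewrite [X in _ %| X]p_prod dvdpZr ?lead_coef_eq0. Qed.

Lemma critical_root_simple a : Q.[a] != 0 -> (count_mem a u <= 1)%N.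
Proof.
move=> Qa; rewrite leqNgt; apply/negP => ge2.
have pa : root p a by rewrite root_deriv_mem -has_pred1 has_count (ltn_trans _ ge2).
have /negP := critical_deriv_neq0 Qcrit pa Qa; apply.
have := dvdp_trans (dvdp_exp2l _ ge2) (root_mult_dvdp a).
by rewrite dvdp_XsubC_expS_deriv // expr1 dvdp_XsubCl.
Qed.

Lemma antideriv_root_mult_dvdp a : Q.[a] = 0 -> ('X - a%:P) ^+ (count_mem a u).+1 %| Q.
Proof. by move=> Qa; rewrite dvdp_XsubC_expS_deriv ?root_mult_dvdp // /root Qa. Qed.

(* Every root of p left of a accounts for a root of Q left of a, and so does a itself
   unless Q(a) = 0, in which case a is a root of Q of multiplicity one more than in p. *)
Definition many_roots_below a := exists s,
  [/\ prodXsubC s %| Q, all (< a) s & (count (< a)%R u + (Q.[a] != 0)%R <= size s)%N].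

Lemma many_roots_upto a : many_roots_below a -> exists s,
  [/\ prodXsubC s %| Q, all (<= a) s & (count (<= a)%R u + (Q.[a] == 0)%R <= size s)%N].
Proof.
case=> s [sQ lts sizes]; rewrite count_leE.
have les : all (<= a) s by apply/allP => x /(allP lts); apply: ltW.
have [Qa|Qa] := eqVneq Q.[a] 0; last first.
  exists s; split=> //; rewrite addn0; apply: leq_trans sizes.
  by rewrite leq_add2l Qa (critical_root_simple Qa).
exists (s ++ nseq (count_mem a u).+1 a); split.
- apply: dvdp_prodXsubC_cat; rewrite ?prodXsubC_nseq ?antideriv_root_mult_dvdp //.
  by move=> x y /(allP lts) xa /nseqP[-> _].
- by rewrite all_cat les all_nseq /= lexx.
- by rewrite size_cat size_nseq addn1 addnS ltnS leq_add2r; rewrite Qa eqxx addn0 in sizes.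
Qed.

Lemma many_roots_below_first a : a \in u -> ~~ has (< a) u -> many_roots_below a.
Proof.
move=> au noL; have cnt : count (< a) u = 0%N.
  by move: noL; rewrite has_count lt0n negbK => /eqP.
have [Qa|Qa] := eqVneq Q.[a] 0; first by exists [::]; rewrite cnt Qa eqxx big_nil dvd1p.
have [||y ya Qy] := root_left_of_critical_points Qcrit (_ : root p a) _ Qa.
- by rewrite root_deriv_mem.
- by move=> x xa; rewrite root_deriv_mem; apply: contra noL => xu; apply/hasP; exists x.
by exists [:: y]; rewrite big_seq1 dvdp_XsubCl cnt Qa /= ya.
Qed.

Lemma many_roots_below_next b a : b < a -> b \in u -> a \in u ->
  (forall x, b < x < a -> x \notin u) -> many_roots_below b -> many_roots_below a.
Proof.
move=> ba bu au nb /many_roots_upto[s [sQ les sizes]].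
have cnt : count (< a) u = count (<= b) u.
  apply: eq_in_count => x xu /=; apply/idP/idP => [xa|xb]; last exact: le_lt_trans xb ba.
  by rewrite leNgt; apply: contraTN xu => bx; apply: nb; rewrite bx xa.
have lts : all (< a) s by apply/allP => x /(allP les) xb; apply: le_lt_trans xb ba.
have [Qa|Qa] := eqVneq Q.[a] 0.
  by exists s; rewrite cnt Qa eqxx addn0; split=> //; apply: leq_trans (leq_addr _ _) sizes.
have [Qb|Qb] := eqVneq Q.[b] 0.
  by exists s; rewrite cnt Qa; split=> //; rewrite Qb eqxx in sizes.
have pb : root p b by rewrite root_deriv_mem.
have pa : root p a by rewrite root_deriv_mem.
have [|y /andP[b_y ya] Qy] := root_between_critical_points Qcrit ba pb pa _ Qb Qa.
  by move=> x /nb; rewrite root_deriv_mem.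
exists (s ++ [:: y]); split.
- apply: dvdp_prodXsubC_cat; rewrite ?big_seq1 ?dvdp_XsubCl //.
  by move=> x z /(allP les) xb; rewrite inE => /eqP->; apply: le_lt_trans b_y.
- by rewrite all_cat lts /= ya.
- by rewrite size_cat cnt Qa /= !addn1 ltnS; rewrite (negPf Qb) addn0 in sizes.
Qed.

Lemma many_roots_below_all a : a \in u -> many_roots_below a.
Proof.
have [n] := ubnP (count (< a) u); elim: n a => // n IH a cn au.
have [hasL|noL] := boolP (has (< a) u); last exact: many_roots_below_first.
have [|b] := exists_max_seq (s := filter (< a) u).
  by rewrite -size_eq0 size_filter -lt0n -has_count.
rewrite mem_filter => /andP[ba bu] bmax.
apply: (many_roots_below_next ba bu au).
  move=> x /andP[bx xa]; apply: contraTN bx => xu.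
  by rewrite -leNgt; apply: (allP bmax); rewrite mem_filter /= xa.
apply: (IH b _ bu); rewrite -ltnS; apply: leq_trans cn; rewrite ltnS.
have : (count (< b) u < count (<= b) u)%N.
  by rewrite count_leE -addn1 leq_add2l -has_count has_pred1.
by move/leq_trans; apply; apply: sub_count => x /= xb; apply: le_lt_trans ba.
Qed.

Lemma critical_value_sign_real_rooted : u != [::] -> real_rooted Q.
Proof.
move=> u0; have [a au amax] := exists_max_seq u0.
have [s [sQ les]] := many_roots_upto (many_roots_below_all au).
have -> : count (<= a) u = size u by apply/eqP; rewrite -all_count.
have Q0 : Q != 0 by apply: contra_neq p0 => ->; rewrite deriv0.
have sizeQ : size Q = (size u).+2.
  have := size_deriv Q; rewrite {1}p_prod size_scale ?lead_coef_eq0 // size_prod_XsubC.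
  by move=> ->; rewrite prednK // lt0n size_poly_eq0.
have [Qa|Qa] := eqVneq Q.[a] 0.
  by rewrite addn1 => sizes; apply: (dvdp_prodXsubC_real_rooted Q0 sQ); rewrite sizeQ.
rewrite addn0 => sizes.
have [||y ay Qy] := root_right_of_critical_points Qcrit (_ : root p a) _ Qa.
- by rewrite root_deriv_mem.
- by move=> x ax; rewrite root_deriv_mem; apply: contraTN ax => /(allP amax) /=; rewrite leNgt.
apply: (@dvdp_prodXsubC_real_rooted _ Q (s ++ [:: y]) Q0).
  apply: dvdp_prodXsubC_cat; rewrite ?big_seq1 ?dvdp_XsubCl //.
  by move=> x z /(allP les) xa; rewrite inE => /eqP->; apply: le_lt_trans ay.
by rewrite sizeQ size_cat /= addn1 !ltnS.
Qed.

End Sweep.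

Theorem real_rooted_antiderivP (R : rcfType) (Q : {poly R}) :
  real_rooted Q^`() -> (1 < size Q^`())%N -> real_rooted Q <-> critical_value_sign Q.
Proof.
move=> preal p1; have p0 : Q^`() != 0 by rewrite -size_poly_eq0 -lt0n ltnW.
split; first exact: real_rooted_critical_value_sign.
move=> Qcrit; have [u pu] := real_rooted_prodXsubC preal.
apply: (critical_value_sign_real_rooted Qcrit p0 pu).
by move: p1; rewrite {1}pu size_scale ?lead_coef_eq0 // size_prod_XsubC ltnS lt0n size_eq0.
Qed.

Lemma critical_value_signP (R : realDomainType) (Q : {poly R}) :
  critical_value_sign Q <-> forall mu, root Q^`() mu ->
    [/\ (Q^`())^`().[mu] < 0 -> 0 <= Q.[mu], (Q^`())^`().[mu] > 0 -> Q.[mu] <= 0 &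
        (Q^`())^`().[mu] = 0 -> Q.[mu] = 0].
Proof.
split=> crit mu pmu.
  have [->|Q0] := eqVneq Q.[mu] 0; first by split; rewrite // lexx.
  have prod_lt0 := crit mu pmu Q0; split=> [neg|pos|p'0].
  - by move: prod_lt0; rewrite nmulr_llt0 // => /ltW.
  - by move: prod_lt0; rewrite pmulr_llt0 // => /ltW.
  - by move: prod_lt0; rewrite p'0 mulr0 ltxx.
move=> Q0; have [neg pos zero] := crit mu pmu.
have [p'_lt0|p'_gt0|p'0] := ltrgtP ((Q^`())^`().[mu]) 0.
- by rewrite nmulr_llt0 // lt0r Q0 neg.
- by rewrite pmulr_llt0 // lt_neqAle Q0 pos.
- by move: Q0; rewrite zero ?eqxx.
Qed.

Theorem lemma2p5 (R : realType) (p : {poly R}) (C : R) :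
  (1 < size p)%N -> real_rooted p ->
  (real_rooted (poly_prim p + C%:P) <->
   forall mu : R, root p mu ->
     [/\ (p^`()).[mu] < 0 -> 0 <= (poly_prim p).[mu] + C,
         (p^`()).[mu] > 0 -> (poly_prim p).[mu] + C <= 0 &
         (p^`()).[mu] = 0 -> (poly_prim p).[mu] + C = 0]).
Proof.
move=> p1 preal; set Q := poly_prim p + C%:P.
have Qp : Q^`() = p by rewrite derivD poly_prim_deriv derivC addr0.
have QE x : Q.[x] = (poly_prim p).[x] + C by rewrite hornerD hornerC.
rewrite -Qp in p1 preal; apply: iff_trans (real_rooted_antiderivP preal p1) _.
apply: iff_trans (critical_value_signP Q) _; rewrite Qp.
by split=> crit mu /crit; rewrite QE.
Qed.
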